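(* Let $g=g(\lambda,\alpha,\delta)$ be a constraint. Then $T\cap\mathfrak{M}\cap\partial\bar{\mathcal{U}}_g$ is the union of two $2$-dimensional linear subspaces of $\mathbb{R}^5$.
   Context: Fix coordinates in $\mathbb{R}^3$ so that the line $\ell_0$ is the $z$-axis. A constraint is an (oriented) line meeting $\ell_0$ in exactly one point. For $\lambda,\alpha,\delta\in\mathbb{R}$, $g(\lambda,\alpha,\delta)$ denotes the constraint through the points $(0,0,\lambda)$ and $(\cos\alpha,\sin\alpha,\lambda+\delta)$ (every constraint is of this form). Its normal is $\eta_g=\big((1-\lambda)\sin\alpha,\,-(1-\lambda)\cos\alpha,\,\lambda\sin\alpha,\,-\lambda\cos\alpha\big)\in\mathbb{R}^4$. Define the closed halfspace $\bar{\mathcal{U}}_g=\{(u_1,\dots,u_5)\in\mathbb{R}^5\mid \delta u_5+\eta_g\cdot(u_1,u_2,u_3,u_4)\le0\}$, with boundary hyperplane $\partial\bar{\mathcal{U}}_g$. Let $\mathfrak{M}=\{u\in\mathbb{R}^5\mid u_5=u_2u_3-u_1u_4\}$ and $T=\{u\in\mathbb{R}^5\mid u_5=0\}$. *)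

From HB Require Import structures.
From mathcomp Require Import all_boot all_order all_algebra.
From mathcomp Require Import all_classical all_reals all_analysis.
Set Implicit Arguments. Unset Strict Implicit. Unset Printing Implicit Defensive.
Import Order.TTheory GRing.Theory Num.Theory.
Local Open Scope ring_scope.

Section Defs.
Variable R : realType.

(* The k-th coordinate (1-indexed, k = 1..5) of a point u of R^5 = 'rV[R]_5. *)
Definition crd (u : 'rV[R]_5) (k : nat) : R := u ord0 (inord k.-1).

Definition eta_g (lam al : R) : 'rV[R]_4 :=
  \row_(i < 4) [:: (1 - lam) * sin al; - ((1 - lam) * cos al);
                   lam * sin al; - (lam * cos al)]`_i.

(* boundary hyperplane of the closed halfspace bar U_g:
   del*u5 + eta_g . (u1,u2,u3,u4) = 0 *)
Definition bdU (lam al del : R) (u : 'rV[R]_5) : Prop :=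
  del * crd u 5 + \sum_(i < 4) eta_g lam al ord0 i * crd u i.+1 = 0.

Definition inM (u : 'rV[R]_5) : Prop :=
  crd u 5 = crd u 2 * crd u 3 - crd u 1 * crd u 4.

Definition inT (u : 'rV[R]_5) : Prop := crd u 5 = 0.
End Defs.

(* On T the quadric M says that the planar vectors p = (u1,u2) and q = (u3,u4)
   are parallel, and the hyperplane says that m = (1-lam) p + lam q is orthogonal
   to n = (sin al, -cos al).  Since m is parallel to both p and q, either m = 0,
   which is a 2-plane, or m spans the line orthogonal to n, forcing p and q onto
   the direction (cos al, sin al), which is another 2-plane. *)
From HB Require Import structures.
From mathcomp Require Import all_boot all_order all_algebra.
From mathcomp Require Import all_classical all_reals all_analysis.
From mathcomp Require Import ring lra.
Set Implicit Arguments. Unset Strict Implicit. Unset Printing Implicit Defensive.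
Import Order.TTheory GRing.Theory Num.Theory.
Local Open Scope ring_scope.

Lemma memv_pair (K : fieldType) (vT : vectType K) (a b u : vT) :
  u \in <<[:: a; b]>>%VS <-> exists x y, u = x *: a + y *: b.
Proof.
rewrite span_cons span_seq1; split.
  by move=> /memv_addP [_ /vlineP [x ->] [_ /vlineP [y ->] ->]]; exists x, y.
by move=> [x [y ->]]; apply: memv_add; apply: memvZ; apply: memv_line.
Qed.

Lemma dimv_pair (K : fieldType) (vT : vectType K) (a b : vT) :
  b != 0 -> (forall k, a <> k *: b) -> \dim <<[:: a; b]>>%VS = 2%N.
Proof.
move=> b_neq0 a_notin_b; apply/eqP.
rewrite [_ == _](_ : _ = free [:: a; b]) // free_cons seq1_free b_neq0 andbT.
by rewrite span_seq1; apply/vlineP => -[k]; apply: a_notin_b.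
Qed.

Lemma unit_dir_decomp (R : comRingType) (s c x y : R) :
  c ^+ 2 + s ^+ 2 = 1 -> s * x = c * y ->
  x = (c * x + s * y) * c /\ y = (c * x + s * y) * s.
Proof.
move=> unit_cs dir_xy; split.
  rewrite -[LHS]mul1r -unit_cs.
  by transitivity (c ^+ 2 * x + s * (s * x)); [ring | rewrite dir_xy; ring].
rewrite -[LHS]mul1r -unit_cs.
by transitivity (s ^+ 2 * y + c * (c * y)); [ring | rewrite -dir_xy; ring].
Qed.

Lemma perp_parallel (R : idomainType) (s c p1 p2 m1 m2 : R) :
  m1 != 0 \/ m2 != 0 -> s * m1 = c * m2 -> p1 * m2 = p2 * m1 -> s * p1 = c * p2.
Proof.
move=> m_neq0 n_perp_m p_par_m; apply: subr0_eq.
have eq_m1 : (s * p1 - c * p2) * m1 = (s * m1 - c * m2) * p1 + (p1 * m2 - p2 * m1) * c.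
  by ring.
have eq_m2 : (s * p1 - c * p2) * m2 = (s * m1 - c * m2) * p2 + (p1 * m2 - p2 * m1) * s.
  by ring.
rewrite n_perp_m p_par_m !subrr !mul0r addr0 in eq_m1 eq_m2.
by case: m_neq0 => mi_neq0; [move: eq_m1 | move: eq_m2];
  move/eqP; rewrite mulf_eq0 (negbTE mi_neq0) orbF => /eqP.
Qed.

Lemma rank_one_cut (R : idomainType) (lam s c p1 p2 q1 q2 : R) :
  c ^+ 2 + s ^+ 2 = 1 ->
  (p2 * q1 = p1 * q2 /\ (1 - lam) * (s * p1 - c * p2) + lam * (s * q1 - c * q2) = 0)
  <-> (s * p1 = c * p2 /\ s * q1 = c * q2) \/
      ((1 - lam) * p1 + lam * q1 = 0 /\ (1 - lam) * p2 + lam * q2 = 0).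
Proof.
move=> unit_cs; set m1 := (1 - lam) * p1 + lam * q1; set m2 := (1 - lam) * p2 + lam * q2.
split=> [[p_par_q n_perp] | [[p_dir q_dir] | [m1_0 m2_0]]].
- have [/andP [/eqP m1_0 /eqP m2_0] | m_neq0] := boolP ((m1 == 0) && (m2 == 0)).
    by right.
  have {}m_neq0 : m1 != 0 \/ m2 != 0 by apply/orP; rewrite -negb_and.
  have n_perp_m : s * m1 = c * m2.
    by apply: subr0_eq; rewrite -[RHS]n_perp /m1 /m2; ring.
  have p_par_m : p1 * m2 = p2 * m1.
    apply: subr0_eq; transitivity (lam * (p1 * q2 - p2 * q1)); first by rewrite /m1 /m2; ring.
    by rewrite p_par_q subrr mulr0.
  have q_par_m : q1 * m2 = q2 * m1.
    apply: subr0_eq; transitivity ((1 - lam) * (p2 * q1 - p1 * q2)); first by rewrite /m1 /m2; ring.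
    by rewrite p_par_q subrr mulr0.
  by left; split; apply: perp_parallel m_neq0 n_perp_m _.
- split; last by rewrite p_dir q_dir !subrr !mulr0 addr0.
  have s_det : s * (p2 * q1 - p1 * q2) = 0.
    by transitivity (p2 * (s * q1) - s * p1 * q2); [ring | rewrite p_dir q_dir; ring].
  have c_det : c * (p2 * q1 - p1 * q2) = 0.
    by transitivity (c * p2 * q1 - p1 * (c * q2)); [ring | rewrite -p_dir -q_dir; ring].
  apply: subr0_eq; rewrite -[LHS]mul1r -unit_cs.
  transitivity (c * (c * (p2 * q1 - p1 * q2)) + s * (s * (p2 * q1 - p1 * q2))); first by ring.
  by rewrite c_det s_det !mulr0 addr0.
- split.
    apply: subr0_eq; transitivity ((p2 * m1 - p1 * m2) - (q2 * m1 - q1 * m2)).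
      by rewrite /m1 /m2; ring.
    by rewrite m1_0 m2_0 !mulr0 subrr.
  transitivity (s * m1 - c * m2); first by rewrite /m1 /m2; ring.
  by rewrite m1_0 m2_0 !mulr0 subrr.
Qed.

Section Row5.
Variable R : realType.

Definition row5 (a b c d e : R) : 'rV[R]_5 := \row_(i < 5) [:: a; b; c; d; e]`_i.

Lemma crd_row5 (a b c d e : R) k : (0 < k <= 5)%N ->
  crd (row5 a b c d e) k = [:: a; b; c; d; e]`_k.-1.
Proof. by case/andP=> k_gt0 k_le5; rewrite /crd mxE inordK // prednK. Qed.

Lemma row5_crd (u : 'rV[R]_5) :
  u = row5 (crd u 1) (crd u 2) (crd u 3) (crd u 4) (crd u 5).
Proof.
apply/rowP=> i; rewrite mxE /crd.
by case: i => [[|[|[|[|[|n]]]]] Hi] //=; congr (u _ _); apply: val_inj; rewrite /= inordK.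
Qed.

Lemma row5_eq (a b c d e a' b' c' d' e' : R) :
  row5 a b c d e = row5 a' b' c' d' e' <->
  [/\ a = a', b = b', c = c', d = d' & e = e'].
Proof.
split=> [eq_row | [-> -> -> -> ->] //].
have eq_crd k : crd (row5 a b c d e) k = crd (row5 a' b' c' d' e') k by rewrite eq_row.
by split; [move: (eq_crd 1%N) | move: (eq_crd 2%N) | move: (eq_crd 3%N)
  | move: (eq_crd 4%N) | move: (eq_crd 5%N)]; rewrite !crd_row5.
Qed.

Lemma row5_0 : row5 0 0 0 0 0 = 0.
Proof. by apply/rowP=> i; rewrite !mxE; case: i => [[|[|[|[|[|n]]]]] Hi]. Qed.

Lemma row5Z (k a b c d e : R) :
  k *: row5 a b c d e = row5 (k * a) (k * b) (k * c) (k * d) (k * e).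
Proof. by apply/rowP=> i; rewrite !mxE; case: i => [[|[|[|[|[|n]]]]] Hi]. Qed.

Lemma row5_lin (x y a b c d e a' b' c' d' e' : R) :
  x *: row5 a b c d e + y *: row5 a' b' c' d' e' =
  row5 (x * a + y * a') (x * b + y * b') (x * c + y * c') (x * d + y * d') (x * e + y * e').
Proof. by apply/rowP=> i; rewrite !mxE; case: i => [[|[|[|[|[|n]]]]] Hi]. Qed.

End Row5.

Lemma bdUE (R : realType) (lam al del : R) (u : 'rV[R]_5) :
  bdU lam al del u <-> del * crd u 5 + ((1 - lam) * (sin al * crd u 1 - cos al * crd u 2)
     + lam * (sin al * crd u 3 - cos al * crd u 4)) = 0.
Proof.
rewrite /bdU !big_ord_recl big_ord0 /eta_g !mxE /=.
have -> : (bump 0 0).+1 = 2%N by [].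
have -> : (bump 0 (bump 0 0)).+1 = 3%N by [].
have -> : (bump 0 (bump 0 (bump 0 0))).+1 = 4%N by [].
set x := (X in X = 0 <-> _); set y := (X in _ <-> X = 0).
by have -> : x = y by rewrite /x /y; ring.
Qed.

Section Components.
Variables (R : realType) (lam s c : R).
Hypothesis unit_cs : c ^+ 2 + s ^+ 2 = 1.

Definition dir_plane : {vspace 'rV[R]_5} :=
  <<[:: row5 c s 0 0 0; row5 0 0 c s 0]>>%VS.

Definition lam_plane : {vspace 'rV[R]_5} :=
  <<[:: row5 lam 0 (lam - 1) 0 0; row5 0 lam 0 (lam - 1) 0]>>%VS.

Lemma mem_dir_plane u : u \in dir_plane <->
  [/\ crd u 5 = 0, s * crd u 1 = c * crd u 2 & s * crd u 3 = c * crd u 4].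
Proof.
rewrite memv_pair {1}[u]row5_crd; split.
  by move=> [x [y]]; rewrite row5_lin => /row5_eq [-> -> -> -> ->]; split; ring.
move=> [u5_0 dir12 dir34].
exists (c * crd u 1 + s * crd u 2), (c * crd u 3 + s * crd u 4).
have [e1 e2] := unit_dir_decomp unit_cs dir12.
have [e3 e4] := unit_dir_decomp unit_cs dir34.
by rewrite row5_lin; apply/row5_eq; rewrite !mulr0 !addr0 !add0r.
Qed.

Lemma mem_lam_plane u : u \in lam_plane <->
  [/\ crd u 5 = 0, (1 - lam) * crd u 1 + lam * crd u 3 = 0
     & (1 - lam) * crd u 2 + lam * crd u 4 = 0].
Proof.
rewrite memv_pair {1}[u]row5_crd; split.
  by move=> [x [y]]; rewrite row5_lin => /row5_eq [-> -> -> -> ->]; split; ring.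
move=> [u5_0 m1_0 m2_0]; exists (crd u 1 - crd u 3), (crd u 2 - crd u 4).
rewrite row5_lin; apply/row5_eq; rewrite !mulr0 !addr0 !add0r; split=> //;
  apply: subr0_eq; by [rewrite -[RHS]m1_0; ring | rewrite -[RHS]m2_0; ring].
Qed.

Lemma unit_neq0 : c = 0 -> s = 0 -> False.
Proof.
by move=> c0 s0; move: unit_cs; rewrite c0 s0 expr0n addr0 => /esym/eqP; rewrite oner_eq0.
Qed.

Lemma dim_dir_plane : \dim dir_plane = 2%N.
Proof.
apply: dimv_pair => [|k].
  by apply/eqP; rewrite -row5_0 => /row5_eq [_ _ c0 s0 _]; apply: unit_neq0.
by rewrite row5Z !mulr0 => /row5_eq [c0 s0 _ _ _]; apply: unit_neq0.
Qed.

Lemma dim_lam_plane : \dim lam_plane = 2%N.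
Proof.
apply: dimv_pair => [|k].
  by apply/eqP; rewrite -row5_0 => /row5_eq [_ l0 _ l1 _]; lra.
by rewrite row5Z !mulr0 => /row5_eq [l0 _ l1 _ _]; lra.
Qed.

Lemma dir_plane_neq_lam_plane : dir_plane != lam_plane.
Proof.
apply/eqP=> planes_eq; have : row5 c s c s 0 \in lam_plane.
  by rewrite -planes_eq mem_dir_plane !crd_row5 //=; split=> //; apply: mulrC.
rewrite mem_lam_plane !crd_row5 //= => -[_ m1_0 m2_0].
have c0 : c = 0 by rewrite -m1_0; ring.
have s0 : s = 0 by rewrite -m2_0; ring.
exact: unit_neq0.
Qed.

End Components.

Theorem lemma9 (R : realType) (lam al del : R) :
  exists V W : {vspace 'rV[R]_5},
    [/\ (\dim V = 2)%N, (\dim W = 2)%N, V != W &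
      forall u : 'rV[R]_5,
        (inT u /\ inM u /\ bdU lam al del u) <-> (u \in V \/ u \in W)].
Proof.
have unit_cs := cos2Dsin2 al.
exists (dir_plane (sin al) (cos al)), (lam_plane lam); split.
- exact: dim_dir_plane.
- exact: dim_lam_plane.
- exact: dir_plane_neq_lam_plane.
move=> u; rewrite /inT /inM bdUE mem_dir_plane // mem_lam_plane.
have cut := rank_one_cut lam (crd u 1) (crd u 2) (crd u 3) (crd u 4) unit_cs.
split=> [[u5_0 [quadric bd]] | planes].
  rewrite u5_0 mulr0 add0r in quadric bd.
  by case: (cut.1 (conj (subr0_eq (esym quadric)) bd)) => -[]; [left | right].
have u5_0 : crd u 5 = 0 by case: planes => -[].
case: cut.2 => [|det_0 bd]; first by case: planes => -[]; [left | right].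
by rewrite u5_0 mulr0 add0r det_0 subrr.
Qed.
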